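(* Every commutative ring $A$ which is a principal ideal domain is a BL-ring.
   Context: For a commutative unitary ring $A$, its ideals $Id(A)$ form a residuated lattice $(Id(A),\cap,+,\otimes,\rightarrow,\{0\},A)$, ordered by inclusion, where $I+J$ is the ideal sum, $I\otimes J$ the ideal product, and $I\rightarrow J=(J:I)=\{x\in A: xI\subseteq J\}$. A BL-algebra is a residuated lattice satisfying prelinearity $(x\rightarrow y)\vee(y\rightarrow x)=1$ and divisibility $x\odot(x\rightarrow y)=x\wedge y$. A BL-ring is a commutative unitary ring whose lattice of ideals, with the structure above, is a BL-algebra. *)

From mathcomp Require Import all_boot all_algebra.
Set Implicit Arguments. Unset Strict Implicit. Unset Printing Implicit Defensive.
Import GRing.Theory.
Local Open Scope ring_scope.

Section IdealLattice.
Variable R : comRingType.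

Definition is_ideal (I : R -> Prop) : Prop :=
  [/\ I 0, (forall x y, I x -> I y -> I (x + y)) & (forall a x, I x -> I (a * x))].

Definition ideal_eq (I J : R -> Prop) : Prop := forall x, I x <-> J x.

Definition ideal_top : R -> Prop := fun _ => True.

Definition ideal_meet (I J : R -> Prop) : R -> Prop := fun x => I x /\ J x.

Definition ideal_sum (I J : R -> Prop) : R -> Prop :=
  fun z => exists x y, [/\ I x, J y & z = x + y].

Definition ideal_prod (I J : R -> Prop) : R -> Prop :=
  fun z => exists s : seq (R * R),
    (forall p, p \in s -> I p.1 /\ J p.2) /\ z = \sum_(p <- s) p.1 * p.2.

(* residuum I -> J = (J : I) *)
Definition ideal_res (I J : R -> Prop) : R -> Prop :=
  fun x => forall y, I y -> J (x * y).

(* BL-ring: the residuated lattice of ideals satisfies prelinearity and divisibility *)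
Definition BL_ring : Prop :=
  forall I J : R -> Prop, is_ideal I -> is_ideal J ->
    ideal_eq (ideal_sum (ideal_res I J) (ideal_res J I)) ideal_top /\
    ideal_eq (ideal_prod I (ideal_res I J)) (ideal_meet I J).

End IdealLattice.

Definition is_PID (R : idomainType) : Prop :=
  forall I : R -> Prop, is_ideal I ->
    exists a : R, forall x, I x <-> exists r : R, x = r * a.

(** Write I = (a), J = (b) and I + J = (d), so a = a' d, b = b' d and d = u a + v b.
    The cofactors satisfy b' a = a' b, hence b' lies in (J : I) and a' in (I : J),
    and cancelling d from d = (u a' + v b') d puts 1 into (J : I) + (I : J); if d = 0
    then I = 0 and (J : I) is already the whole ring.  Divisibility only needs I
    principal: for x = r a in J, the element r lies in (J : I) and x = a r. *)
From mathcomp Require Import all_boot all_algebra.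
From mathcomp Require Import ring.
Set Implicit Arguments. Unset Strict Implicit. Unset Printing Implicit Defensive.
Import GRing.Theory.
Local Open Scope ring_scope.

Section CommutativeRing.
Variable R : comNzRingType.
Implicit Types (I J K : R -> Prop) (a b d x : R).

Definition principal a : R -> Prop := fun x => exists r, x = r * a.

Lemma principal_gen a : principal a a.
Proof. by exists 1; rewrite mul1r. Qed.

Lemma ideal_eq_top K : is_ideal K -> K 1 -> ideal_eq K (@ideal_top R).
Proof. by case=> _ _ KM K1 x; split=> // _; rewrite -[x]mulr1; apply: KM. Qed.

Lemma is_ideal_sum I J : is_ideal I -> is_ideal J -> is_ideal (ideal_sum I J).
Proof.
case=> I0 ID IM [J0 JD JM]; split.
- by exists 0, 0; rewrite addr0.
- move=> _ _ [x1 [y1 [Ix1 Jy1 ->]]] [x2 [y2 [Ix2 Jy2 ->]]].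
  by exists (x1 + x2), (y1 + y2); split; [exact: ID | exact: JD | ring].
- move=> c _ [x [y [Ix Jy ->]]].
  by exists (c * x), (c * y); split; [exact: IM | exact: JM | rewrite mulrDr].
Qed.

Lemma is_ideal_meet I J : is_ideal I -> is_ideal J -> is_ideal (ideal_meet I J).
Proof.
case=> I0 ID IM [J0 JD JM]; split=> [//|x y [Ix Jx] [Iy Jy]|c x [Ix Jx]].
  by split; [exact: ID | exact: JD].
by split; [exact: IM | exact: JM].
Qed.

Lemma is_ideal_res I J : is_ideal J -> is_ideal (ideal_res I J).
Proof.
case=> J0 JD JM; split=> [y _|x x' Rx Rx' y Iy|c x Rx y Iy].
- by rewrite mul0r.
- by rewrite mulrDl; apply: JD; [exact: Rx | exact: Rx'].
- by rewrite -mulrA; apply: JM; exact: Rx.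
Qed.

Lemma ideal_prod_res_sub_meet I J x :
  is_ideal I -> is_ideal J -> ideal_prod I (ideal_res I J) x -> ideal_meet I J x.
Proof.
move=> hI hJ [s [Hs ->]]; rewrite big_seq.
have [meet0 meetD _] := is_ideal_meet hI hJ.
apply: (big_ind (ideal_meet I J) meet0 meetD) => p /Hs [Ip Rp].
case: hI => _ _ IM; split; first by rewrite mulrC; apply: IM.
by rewrite mulrC; apply: Rp.
Qed.

Lemma principal_meet_sub_prod_res a I J x :
  ideal_eq I (principal a) -> is_ideal J ->
  ideal_meet I J x -> ideal_prod I (ideal_res I J) x.
Proof.
move=> Ha [_ _ JM] [/Ha [r ->] Jx]; exists [:: (a, r)]; split.
  move=> p; rewrite inE => /eqP -> /=; split; first exact/Ha/principal_gen.
  by move=> _ /Ha [c ->]; rewrite mulrCA; apply: JM.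
by rewrite big_seq1 mulrC.
Qed.

Lemma principal_divisibility a I J :
  is_ideal I -> is_ideal J -> ideal_eq I (principal a) ->
  ideal_eq (ideal_prod I (ideal_res I J)) (ideal_meet I J).
Proof.
move=> hI hJ Ha x; split; first exact: ideal_prod_res_sub_meet.
exact: principal_meet_sub_prod_res.
Qed.

Lemma principal_res_cofactor a b a' b' d I J :
  ideal_eq I (principal a) -> ideal_eq J (principal b) ->
  a = a' * d -> b = b' * d -> ideal_res I J b'.
Proof.
move=> Ha Hb ea eb _ /Ha [r ->]; apply/Hb.
by exists (r * a'); rewrite eb ea; ring.
Qed.

End CommutativeRing.

Section IntegralDomain.
Variable R : idomainType.
Implicit Types (I J : R -> Prop) (a b d : R).

Lemma principal_prelinearity a b d I J :
  is_ideal I -> is_ideal J -> ideal_eq I (principal a) ->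
  ideal_eq J (principal b) -> ideal_eq (ideal_sum I J) (principal d) ->
  ideal_sum (ideal_res I J) (ideal_res J I) 1.
Proof.
move=> hI hJ Ha Hb Hd.
have [a' ea] : principal d a.
  by apply/Hd; exists a, 0; rewrite addr0; split=> //; [exact/Ha/principal_gen | case: hJ].
have [b' eb] : principal d b.
  by apply/Hd; exists 0, b; rewrite add0r; split=> //; [case: hI | exact/Hb/principal_gen].
have [x [y [/Ha [u ->] /Hb [v ->] ed]]] := (Hd d).2 (principal_gen d).
have resIJ := principal_res_cofactor Ha Hb ea eb.
have resJI := principal_res_cofactor Hb Ha eb ea.
have [_ _ resIJM] := is_ideal_res I hJ.
have [resJI0 _ resJIM] := is_ideal_res J hI.
have [d0 | dn0] := eqVneq d 0.
  exists 1, 0; rewrite addr0; split=> //.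
  by move=> _ /Ha [r ->]; rewrite ea d0 !mulr0; case: hJ.
have bezout : v * b' + u * a' = 1.
  by apply: (mulIf dn0); rewrite mul1r [RHS]ed ea eb; ring.
exists (v * b'), (u * a'); split=> //; [exact: resIJM resIJ | exact: resJIM resJI].
Qed.

End IntegralDomain.

Theorem theorem3p7 (R : idomainType) : is_PID R -> BL_ring R.
Proof.
move=> pid I J hI hJ.
have [a Ha] := pid I hI; have [b Hb] := pid J hJ.
have [d Hd] := pid _ (is_ideal_sum hI hJ).
split; last exact: principal_divisibility Ha.
apply: ideal_eq_top; first by apply: is_ideal_sum; apply: is_ideal_res.
exact: principal_prelinearity Ha Hb Hd.
Qed.
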